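(* The adjunction $\text{St}_{\text{Alg}}:\text{AlgKan}\rightleftarrows\text{sTCom}:\text{U}_{\text{Alg}}$ is a Quillen adjunction.
   Context: An algebraic Kan complex is a simplicial set with a chosen filler for every horn; morphisms ($\text{AlgKan}$) are simplicial maps preserving the chosen fillers. $\text{AlgKan}$ carries the model structure of Nikolaus, in which a map is a weak equivalence (resp. fibration) iff its underlying map of simplicial sets is a weak homotopy equivalence (resp. Kan fibration). A simplicial $T$-complex is a simplicial set with marked (''thin'') simplices such that degenerate simplices are thin, every horn $\Lambda^n_k$ has a unique filler with thin top simplex, and if all nondegenerate faces of a horn are thin then its composition (the $k$-th face of that filler) is thin; $\text{sTCom}$ has morphisms the thin-preserving simplicial maps and carries the model structure whose weak equivalences and fibrations are the maps that are weak homotopy equivalences, resp. Kan fibrations, of underlying simplicial sets. $\text{U}_{\text{Alg}}$ regards a $T$-complex as an algebraic Kan complex with chosen fillers the thin fillers, and $\text{St}_{\text{Alg}}$ is its left adjoint. *)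

From Stdlib Require Import ClassicalEpsilon Relation_Operators.
From mathcomp Require Import all_boot.

Unset Implicit Arguments.
Unset Strict Implicit.
Unset Printing Implicit Defensive.

Definition monob {m n : nat} (f : {ffun 'I_m.+1 -> 'I_n.+1}) : bool :=
  [forall i : 'I_m.+1, forall j : 'I_m.+1, (i <= j) ==> (f i <= f j)].

Definition mono (m n : nat) := {f : {ffun 'I_m.+1 -> 'I_n.+1} | monob f}.

Definition mapp {m n : nat} (f : mono m n) (i : 'I_m.+1) : 'I_n.+1 := val f i.

Lemma mk_monoP {m n : nat} {f : 'I_m.+1 -> 'I_n.+1} :
  {homo f : i j / i <= j} -> monob [ffun i => f i].
Proof.
move=> H; apply/forallP => i; apply/forallP => j; apply/implyP => hij.
by rewrite !ffunE; apply: H.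
Qed.

Definition mk_mono {m n : nat} (f : 'I_m.+1 -> 'I_n.+1)
  (H : {homo f : i j / i <= j}) : mono m n := exist (@monob m n) _ (mk_monoP H).

Lemma mapp_homo {m n : nat} (f : mono m n) : {homo mapp f : i j / i <= j}.
Proof.
move=> i j hij; rewrite /mapp; case: f => g Hg /=.
by move: (Hg) => /forallP /(_ i) /forallP /(_ j) /implyP; apply.
Qed.

Definition mono_id (n : nat) : mono n n := @mk_mono n n id (fun _ _ h => h).

Definition mono_comp {p m n : nat} (g : mono m n) (f : mono p m) : mono p n :=
  @mk_mono p n (fun i => mapp g (mapp f i))
    (fun i j h => mapp_homo g _ _ (mapp_homo f _ _ h)).

Lemma lift_homo {m : nat} (i : 'I_m.+2) :
  {homo (@lift m.+2 i) : a b / a <= b}.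
Proof. by move=> a b hab; rewrite /= leq_bump2. Qed.

Definition coface {m : nat} (i : 'I_m.+2) : mono m m.+1 :=
  @mk_mono m m.+1 (@lift m.+2 i) (lift_homo i).

Definition cst {n : nat} (j : 'I_2) : mono n 1 :=
  @mk_mono n 1 (fun _ => j) (fun _ _ _ => leqnn _).

Record sSet := SSet {
  sim :> nat -> Type;
  act : forall m n, mono m n -> sim n -> sim m;
  act_id : forall n (x : sim n), act n n (mono_id n) x = x;
  act_comp : forall p m n (g : mono m n) (f : mono p m) (x : sim n),
      act p n (mono_comp g f) x = act p m f (act m n g x)
}.
Arguments act {s m n}.

Record sMap (X Y : sSet) := SMap {
  smap :> forall n, X n -> Y n;
  smap_nat : forall m n (f : mono m n) (x : X n),
      smap m (act f x) = act f (smap n x)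
}.
Arguments smap {X Y} s n _.
Arguments SMap {X Y} smap smap_nat.

Definition smap_comp {X Y Z : sSet} (g : sMap Y Z) (f : sMap X Y) : sMap X Z.
Proof.
refine (SMap (fun n x => g n (f n x)) _).
by move=> m n a x; rewrite !smap_nat.
Defined.

(* A horn Lambda^{m+1}_k in X: compatible family of m-simplices x_i, i <> k
   (this is exactly a simplicial map Lambda^{m+1}_k -> X, the horn being the
   union of the faces delta_i, i <> k, glued along their intersections). *)
Record horn (X : sSet) (m : nat) (k : 'I_m.+2) := Horn {
  hface : forall i : 'I_m.+2, i != k -> X m;
  hcompat : forall (i j : 'I_m.+2) (hi : i != k) (hj : j != k) (p : nat)
      (a b : mono p m),
      (forall t, lift i (mapp a t) = lift j (mapp b t)) ->
      act a (hface i hi) = act b (hface j hj)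
}.
Arguments hface {X m k} h {i} hi.
Arguments Horn {X m k} hface hcompat.

Definition fills {X : sSet} {m : nat} {k : 'I_m.+2} (h : horn X m k)
  (y : X m.+1) : Prop :=
  forall (i : 'I_m.+2) (hi : i != k), act (coface i) y = hface h hi.

Definition map_horn {X Y : sSet} (f : sMap X Y) {m : nat} {k : 'I_m.+2}
  (h : horn X m k) : horn Y m k.
Proof.
refine (Horn (fun i hi => f m (hface h hi)) _).
move=> i j hi hj p a b E; rewrite -!smap_nat; congr (f p _).
exact: hcompat.
Defined.

Definition kan_fib {X Y : sSet} (f : sMap X Y) : Prop :=
  forall (m : nat) (k : 'I_m.+2) (h : horn X m k) (y : Y m.+1),
    (forall (i : 'I_m.+2) (hi : i != k), act (coface i) y = f m (hface h hi)) ->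
    exists z : X m.+1, fills h z /\ f m.+1 z = y.

Definition is_kan (Z : sSet) : Prop :=
  forall (m : nat) (k : 'I_m.+2) (h : horn Z m k), exists y, fills h y.

(* Simplicial homotopy X x Delta^1 -> Z from g to h
   ((X x Delta^1)_n = X_n x Delta([n],[1])). *)
Record shomotopy (X Z : sSet) (g h : sMap X Z) := SHomotopy {
  hmap : forall n, X n -> mono n 1 -> Z n;
  hmap_nat : forall m n (f : mono m n) (x : X n) (e : mono n 1),
      hmap m (act f x) (mono_comp e f) = act f (hmap n x e);
  hmap0 : forall n (x : X n), hmap n x (@cst n ord0) = g n x;
  hmap1 : forall n (x : X n), hmap n x (@cst n ord_max) = h n x
}.
Arguments shomotopy {X Z} g h.

Definition homotopic {X Z : sSet} (g h : sMap X Z) : Prop :=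
  clos_refl_sym_trans (sMap X Z) (fun a b => inhabited (shomotopy a b)) g h.

Definition weq {X Y : sSet} (f : sMap X Y) : Prop :=
  forall Z : sSet, is_kan Z ->
    (forall h : sMap X Z, exists g : sMap Y Z, homotopic (smap_comp g f) h) /\
    (forall g1 g2 : sMap Y Z,
        homotopic (smap_comp g1 f) (smap_comp g2 f) -> homotopic g1 g2).

Record algKan := AlgKan {
  ak :> sSet;
  akfill : forall (m : nat) (k : 'I_m.+2), horn ak m k -> ak m.+1;
  akfillP : forall (m : nat) (k : 'I_m.+2) (h : horn ak m k), fills h (akfill m k h)
}.
Arguments akfill {a m k}.

Record akMor (X Y : algKan) := AkMor {
  akmap :> sMap X Y;
  akmapP : forall (m : nat) (k : 'I_m.+2) (h : horn X m k),
      akmap m.+1 (akfill h) = akfill (map_horn akmap h)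
}.

Definition AlgKan_fib {X Y : algKan} (f : akMor X Y) : Prop := kan_fib f.
Definition AlgKan_weq {X Y : algKan} (f : akMor X Y) : Prop := weq f.

Arguments AkMor {X Y} akmap akmapP.
Arguments akmap {X Y} a.

Definition degenerate {X : sSet} {n : nat} (x : X n) : Prop :=
  exists p : nat, p < n /\ exists (s : mono n p) (y : X p), x = act s y.

Record tcomplex := TComplex {
  tc :> sSet;
  thin : forall n, tc n -> Prop;
  thin_degen : forall n (x : tc n), degenerate x -> thin n x;
  thin_fill : forall (m : nat) (k : 'I_m.+2) (h : horn tc m k),
      exists! y : tc m.+1, thin m.+1 y /\ fills h y;
  thin_comp : forall (m : nat) (k : 'I_m.+2) (h : horn tc m k) (y : tc m.+1),
      thin m.+1 y -> fills h y ->
      (forall (i : 'I_m.+2) (hi : i != k),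
          ~ degenerate (hface h hi) -> thin m (hface h hi)) ->
      thin m (act (coface k) y)
}.
Arguments thin {t n}.
Arguments thin_fill {t m k} h.

Record tMor (X Y : tcomplex) := TMor {
  tmap :> sMap X Y;
  tmapP : forall n (x : X n), thin x -> thin (tmap n x)
}.
Arguments tmap {X Y} t.
Arguments tmapP {X Y} t {n x}.

Definition sTCom_fib {X Y : tcomplex} (f : tMor X Y) : Prop := kan_fib f.
Definition sTCom_weq {X Y : tcomplex} (f : tMor X Y) : Prop := weq f.

Lemma exu_ex {A : Type} {P : A -> Prop} : (exists! x, P x) -> exists x, P x.
Proof. by case=> x [Hx _]; exists x. Qed.

Definition tfill {X : tcomplex} {m : nat} {k : 'I_m.+2} (h : horn X m k) : X m.+1 :=
  proj1_sig (constructive_indefinite_description _ (exu_ex (thin_fill h))).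

Lemma tfillP {X : tcomplex} {m : nat} {k : 'I_m.+2} (h : horn X m k) :
  thin (tfill h) /\ fills h (tfill h).
Proof. rewrite /tfill; case: constructive_indefinite_description => y /= Hy; exact: Hy. Qed.

Definition U_Alg (X : tcomplex) : algKan :=
  AlgKan X (@tfill X) (fun m k h => proj2 (tfillP h)).

Lemma U_Alg_homP (X Y : tcomplex) (f : tMor X Y) (m : nat) (k : 'I_m.+2)
  (h : horn X m k) : f m.+1 (tfill h) = tfill (map_horn f h).
Proof.
have [yu [_ U]] := thin_fill (map_horn f h).
have [t1 f1] := tfillP h.
have [t2 f2] := tfillP (map_horn f h).
have e1 := U _ (conj t2 f2).
have e2 : yu = f m.+1 (tfill h).
  apply: U; split; first exact: (tmapP f t1).
  by move=> i hi; rewrite -smap_nat f1.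
by rewrite -e2.
Qed.

Definition U_Alg_hom {X Y : tcomplex} (f : tMor X Y) : akMor (U_Alg X) (U_Alg Y) :=
  @AkMor (U_Alg X) (U_Alg Y) (tmap f) (U_Alg_homP X Y f).

From mathcomp Require Import all_boot.

(* Both model structures are created by the underlying simplicial sets, and
   U_Alg does not change the underlying simplicial map; hence U_Alg reflects
   and preserves fibrations and weak equivalences, so in particular it is a
   right Quillen functor. *)

Lemma U_Alg_homE {X Y : tcomplex} (f : tMor X Y) : akmap (U_Alg_hom f) = tmap f.
Proof. by []. Qed.

Lemma U_Alg_fibE {X Y : tcomplex} (f : tMor X Y) :
  AlgKan_fib (U_Alg_hom f) <-> sTCom_fib f.
Proof. by rewrite /AlgKan_fib /sTCom_fib U_Alg_homE. Qed.

Lemma U_Alg_weqE {X Y : tcomplex} (f : tMor X Y) :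
  AlgKan_weq (U_Alg_hom f) <-> sTCom_weq f.
Proof. by rewrite /AlgKan_weq /sTCom_weq U_Alg_homE. Qed.

Theorem mainTheorem9 :
  forall (X Y : tcomplex) (f : tMor X Y),
    (sTCom_fib f -> AlgKan_fib (U_Alg_hom f)) /\
    (sTCom_fib f /\ sTCom_weq f ->
       AlgKan_fib (U_Alg_hom f) /\ AlgKan_weq (U_Alg_hom f)).
Proof.
move=> X Y f; split; first exact: (proj2 (U_Alg_fibE f)).
by case=> /(U_Alg_fibE f) fib /(U_Alg_weqE f) we.
Qed.
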